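(* Let $T=(T,\mu,\iota)$ be a normal lax double monad on an equipment $\mathcal K$. For every vertical morphism $f\colon A\to C$ in $\mathcal K$, the cell $\iota_{f_*}$ (where $f_*\colon A\nrightarrow C$ is the companion of $f$) satisfies the right Beck–Chevalley condition.
   Context: Double categories: a double category has objects, vertical morphisms (composition $\circ$), horizontal morphisms $J\colon A\nrightarrow B$ (composition $\odot$ in diagrammatic order, units $1_A$, weakly associative/unital) and cells with horizontal source $J\colon A\nrightarrow B$, horizontal target $K\colon C\nrightarrow D$, vertical sides $f\colon A\to C$, $g\colon B\to D$; horizontal cells are those with identity vertical sides. A cell $\phi\colon J\Rightarrow K$ with sides $f,g$ is cartesian if every cell $H\Rightarrow K$ with sides $f\circ h,g\circ k$ factors uniquely through $\phi$ via a cell $H\Rightarrow J$ with sides $h,k$; opcartesian dually. The companion $f_*\colon A\nrightarrow C$ of $f\colon A\to C$ is the restriction of $1_C$ along $f,\mathrm{id}_C$, given by a cartesian cell $f_*\Rightarrow 1_C$ with sides $f,\mathrm{id}_C$, equivalently by an opcartesian cell $1_A\Rightarrow f_*$ with sides $\mathrm{id}_A,f$. An equipment is a double category with all companions and conjoints. A normal lax double monad $(T,\mu,\iota)$ on $\mathcal K$: a lax double functor $T\colon\mathcal K\to\mathcal K$ preserving vertical composition, identities and horizontal units strictly and horizontal composition up to coherent compositor cells $TJ\odot TH\Rightarrow T(J\odot H)$, with double transformations $\mu\colon T^2\Rightarrow T$, $\iota\colon\mathrm{id}\Rightarrow T$ satisfying the monad axioms; $\iota$ consists of vertical morphisms $\iota_A\colon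 A\to TA$ and cells $\iota_J\colon J\Rightarrow TJ$ with vertical sides $\iota_A,\iota_B$, natural, compatible with compositors, with $\iota_{1_A}=1_{\iota_A}$. Right Beck–Chevalley condition: for $J\colon A\nrightarrow B$ let $\iota_{J*}\colon J\odot\iota_{B*}\Rightarrow\iota_{A*}\odot TJ$ be the horizontal cell obtained as the horizontal composite of the opcartesian cell $1_A\Rightarrow\iota_{A*}$ (sides $\mathrm{id}_A,\iota_A$), the cell $\iota_J$, and the cartesian cell $\iota_{B*}\Rightarrow 1_{TB}$ (sides $\iota_B,\mathrm{id}_{TB}$). We say $\iota_J$ satisfies the right Beck–Chevalley condition if $\iota_{J*}$ is invertible. *)

Set Implicit Arguments.
Unset Strict Implicit.

(* Vertical composition is written  vcomp g f = g o f  (f : A -> B,    *)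
(* g : B -> C).  Horizontal composition  hcomp J K = J (.) K  is in     *)
(* diagrammatic order.  A cell  cell J K f g  has horizontal source     *)
(* J : A -|-> B, horizontal target K : C -|-> D and vertical sides      *)
(* f : A -> C, g : B -> D.                                             *)
Record DCData := {
  ob : Type;
  ver : ob -> ob -> Type;
  vid : forall A : ob, ver A A;
  vcomp : forall A B C : ob, ver B C -> ver A B -> ver A C;
  hor : ob -> ob -> Type;
  cell : forall A B C D : ob, hor A B -> hor C D -> ver A C -> ver B D -> Type;
  cid : forall (A B : ob) (J : hor A B), cell J J (vid A) (vid B);
  ccomp : forall (A B C D E F : ob) (J : hor A B) (K : hor C D) (L : hor E F)
            (f : ver A C) (g : ver B D) (f' : ver C E) (g' : ver D F),
            cell J K f g -> cell K L f' g' -> cell J L (vcomp f' f) (vcomp g' g);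
  hunit : forall A : ob, hor A A;
  hunit_cell : forall (A C : ob) (f : ver A C), cell (hunit A) (hunit C) f f;
  hcomp : forall A B C : ob, hor A B -> hor B C -> hor A C;
  hcomp_cell : forall (A B C A' B' C' : ob) (J : hor A B) (J' : hor B C)
                 (K : hor A' B') (K' : hor B' C') (f : ver A A') (g : ver B B') (h : ver C C'),
                 cell J K f g -> cell J' K' g h -> cell (hcomp J J') (hcomp K K') f h;
  assoc : forall (A B C D : ob) (J : hor A B) (K : hor B C) (L : hor C D),
            cell (hcomp (hcomp J K) L) (hcomp J (hcomp K L)) (vid A) (vid D);
  assoc_inv : forall (A B C D : ob) (J : hor A B) (K : hor B C) (L : hor C D),
            cell (hcomp J (hcomp K L)) (hcomp (hcomp J K) L) (vid A) (vid D);
  lunit : forall (A B : ob) (J : hor A B), cell (hcomp (hunit A) J) J (vid A) (vid B);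
  lunit_inv : forall (A B : ob) (J : hor A B), cell J (hcomp (hunit A) J) (vid A) (vid B);
  runit : forall (A B : ob) (J : hor A B), cell (hcomp J (hunit B)) J (vid A) (vid B);
  runit_inv : forall (A B : ob) (J : hor A B), cell J (hcomp J (hunit B)) (vid A) (vid B)
}.

Arguments vid {d} A.
Arguments vcomp {d A B C} _ _.
Arguments cell {d A B C D} _ _ _ _.
Arguments cid {d A B} J.
Arguments ccomp {d A B C D E F J K L f g f' g'} _ _.
Arguments hunit {d} A.
Arguments hunit_cell {d A C} f.
Arguments hcomp {d A B C} _ _.
Arguments hcomp_cell {d A B C A' B' C' J J' K K' f g h} _ _.
Arguments assoc {d A B C D} J K L.
Arguments assoc_inv {d A B C D} J K L.
Arguments lunit {d A B} J.
Arguments lunit_inv {d A B} J.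
Arguments runit {d A B} J.
Arguments runit_inv {d A B} J.

Section DoubleCategories.
Context (DC : DCData).
Local Notation O := (ob DC).

Definition ccast (A B C D : O) (J J' : hor A B) (K K' : hor C D)
  (f f' : ver A C) (g g' : ver B D)
  (eJ : J = J') (eK : K = K') (ef : f = f') (eg : g = g') (x : cell J K f g) :
  cell J' K' f' g' :=
  match eJ in _ = J1, eK in _ = K1, ef in _ = f1, eg in _ = g1
        return cell J1 K1 f1 g1 with
  | eq_refl, eq_refl, eq_refl, eq_refl => x
  end.

(* equality of cells (with the same corner objects) once their boundaries,
   which agree propositionally, are identified *)
Definition ceq (A B C D : O) (J J' : hor A B) (K K' : hor C D)
  (f f' : ver A C) (g g' : ver B D) (x : cell J K f g) (y : cell J' K' f' g') : Prop :=
  exists (eJ : J = J') (eK : K = K') (ef : f = f') (eg : g = g'),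
    ccast eJ eK ef eg x = y.

Record DCAxioms : Prop := {
  vcomp_idl : forall (A B : O) (f : ver A B), vcomp (vid B) f = f;
  vcomp_idr : forall (A B : O) (f : ver A B), vcomp f (vid A) = f;
  vcomp_assoc : forall (A B C D : O) (f : ver A B) (g : ver B C) (h : ver C D),
      vcomp h (vcomp g f) = vcomp (vcomp h g) f;
  ccomp_idl : forall (A B C D : O) (J : hor A B) (K : hor C D) (f : ver A C) (g : ver B D)
      (x : cell J K f g), ceq (ccomp (cid J) x) x;
  ccomp_idr : forall (A B C D : O) (J : hor A B) (K : hor C D) (f : ver A C) (g : ver B D)
      (x : cell J K f g), ceq (ccomp x (cid K)) x;
  ccomp_assoc : forall (A1 B1 A2 B2 A3 B3 A4 B4 : O)
      (J1 : hor A1 B1) (J2 : hor A2 B2) (J3 : hor A3 B3) (J4 : hor A4 B4)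
      (f1 : ver A1 A2) (g1 : ver B1 B2) (f2 : ver A2 A3) (g2 : ver B2 B3)
      (f3 : ver A3 A4) (g3 : ver B3 B4)
      (x : cell J1 J2 f1 g1) (y : cell J2 J3 f2 g2) (z : cell J3 J4 f3 g3),
      ceq (ccomp (ccomp x y) z) (ccomp x (ccomp y z));
  hcomp_cid : forall (A B C : O) (J : hor A B) (K : hor B C),
      hcomp_cell (cid J) (cid K) = cid (hcomp J K);
  interchange : forall (A1 B1 C1 A2 B2 C2 A3 B3 C3 : O)
      (J : hor A1 B1) (J' : hor B1 C1) (K : hor A2 B2) (K' : hor B2 C2)
      (L : hor A3 B3) (L' : hor B3 C3)
      (f : ver A1 A2) (g : ver B1 B2) (h : ver C1 C2)
      (f' : ver A2 A3) (g' : ver B2 B3) (h' : ver C2 C3)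
      (x : cell J K f g) (y : cell K L f' g') (x' : cell J' K' g h) (y' : cell K' L' g' h'),
      hcomp_cell (ccomp x y) (ccomp x' y') = ccomp (hcomp_cell x x') (hcomp_cell y y');
  hunit_cell_id : forall A : O, hunit_cell (vid A) = cid (hunit A);
  hunit_cell_comp : forall (A B C : O) (f : ver A B) (g : ver B C),
      hunit_cell (vcomp g f) = ccomp (hunit_cell f) (hunit_cell g);
  assoc_iso1 : forall (A B C D : O) (J : hor A B) (K : hor B C) (L : hor C D),
      ceq (ccomp (assoc J K L) (assoc_inv J K L)) (cid (hcomp (hcomp J K) L));
  assoc_iso2 : forall (A B C D : O) (J : hor A B) (K : hor B C) (L : hor C D),
      ceq (ccomp (assoc_inv J K L) (assoc J K L)) (cid (hcomp J (hcomp K L)));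
  lunit_iso1 : forall (A B : O) (J : hor A B),
      ceq (ccomp (lunit J) (lunit_inv J)) (cid (hcomp (hunit A) J));
  lunit_iso2 : forall (A B : O) (J : hor A B), ceq (ccomp (lunit_inv J) (lunit J)) (cid J);
  runit_iso1 : forall (A B : O) (J : hor A B),
      ceq (ccomp (runit J) (runit_inv J)) (cid (hcomp J (hunit B)));
  runit_iso2 : forall (A B : O) (J : hor A B), ceq (ccomp (runit_inv J) (runit J)) (cid J);
  assoc_nat : forall (A B C E A' B' C' E' : O)
      (J : hor A B) (K : hor B C) (L : hor C E) (J' : hor A' B') (K' : hor B' C') (L' : hor C' E')
      (f : ver A A') (g : ver B B') (h : ver C C') (k : ver E E')
      (x : cell J J' f g) (y : cell K K' g h) (z : cell L L' h k),
      ceq (ccomp (hcomp_cell (hcomp_cell x y) z) (assoc J' K' L'))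
          (ccomp (assoc J K L) (hcomp_cell x (hcomp_cell y z)));
  lunit_nat : forall (A B A' B' : O) (J : hor A B) (J' : hor A' B') (f : ver A A') (g : ver B B')
      (x : cell J J' f g),
      ceq (ccomp (hcomp_cell (hunit_cell f) x) (lunit J')) (ccomp (lunit J) x);
  runit_nat : forall (A B A' B' : O) (J : hor A B) (J' : hor A' B') (f : ver A A') (g : ver B B')
      (x : cell J J' f g),
      ceq (ccomp (hcomp_cell x (hunit_cell g)) (runit J')) (ccomp (runit J) x);
  pentagon : forall (A B C D E : O) (J : hor A B) (K : hor B C) (L : hor C D) (M : hor D E),
      ceq (ccomp (assoc (hcomp J K) L M) (assoc J K (hcomp L M)))
          (ccomp (ccomp (hcomp_cell (assoc J K L) (cid M)) (assoc J (hcomp K L) M))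
                 (hcomp_cell (cid J) (assoc K L M)));
  triangle : forall (A B C : O) (J : hor A B) (K : hor B C),
      ceq (ccomp (assoc J (hunit B) K) (hcomp_cell (cid J) (lunit K)))
          (hcomp_cell (runit J) (cid K))
}.

Definition cartesian (A B C D : O) (J : hor A B) (K : hor C D) (f : ver A C) (g : ver B D)
  (phi : cell J K f g) : Prop :=
  forall (X Y : O) (H : hor X Y) (h : ver X A) (k : ver Y B)
         (psi : cell H K (vcomp f h) (vcomp g k)),
    exists! chi : cell H J h k, ccomp chi phi = psi.

Definition opcartesian (A B C D : O) (J : hor A B) (K : hor C D) (f : ver A C) (g : ver B D)
  (phi : cell J K f g) : Prop :=
  forall (X Y : O) (L : hor X Y) (h : ver C X) (k : ver D Y)
         (psi : cell J L (vcomp h f) (vcomp k g)),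
    exists! chi : cell K L h k, ccomp phi chi = psi.

(* a companion f_* : A -|-> C of f : A -> C: the restriction of 1_C along
   f, id_C (cartesian cell f_* => 1_C), equivalently given by an
   opcartesian cell 1_A => f_* with sides id_A, f *)
Record companion (A C : O) (f : ver A C) := {
  cmp : hor A C;
  cmp_cart : cell cmp (hunit C) f (vid C);
  cmp_opcart : cell (hunit A) cmp (vid A) f;
  cmp_cart_ok : cartesian cmp_cart;
  cmp_opcart_ok : opcartesian cmp_opcart
}.

Record conjoint (A C : O) (f : ver A C) := {
  cnj : hor C A;
  cnj_cart : cell cnj (hunit C) (vid C) f;
  cnj_opcart : cell (hunit A) cnj f (vid A);
  cnj_cart_ok : cartesian cnj_cart;
  cnj_opcart_ok : opcartesian cnj_opcart
}.

Definition hinvertible (A B : O) (J K : hor A B) (x : cell J K (vid A) (vid B)) : Prop :=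
  exists y : cell K J (vid A) (vid B),
    ceq (ccomp x y) (cid J) /\ ceq (ccomp y x) (cid K).

(* a cell whose vertical sides are (propositionally) identities, e.g. built
   from composites of identities, is invertible as a horizontal cell *)
Definition hinvertible_up (A B : O) (J K : hor A B) (f : ver A A) (g : ver B B)
  (x : cell J K f g) : Prop :=
  exists y : cell J K (vid A) (vid B), ceq x y /\ hinvertible y.

Record LaxData := {
  fo : O -> O;
  fv : forall A B : O, ver A B -> ver (fo A) (fo B);
  fh : forall A B : O, hor A B -> hor (fo A) (fo B);
  fc : forall (A B C D : O) (J : hor A B) (K : hor C D) (f : ver A C) (g : ver B D),
         cell J K f g -> cell (fh J) (fh K) (fv f) (fv g);
  fcomp : forall (A B C : O) (J : hor A B) (K : hor B C),
         cell (hcomp (fh J) (fh K)) (fh (hcomp J K)) (vid (fo A)) (vid (fo C))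
}.

Record NormalLax (F : LaxData) : Prop := {
  fv_comp : forall (A B C : O) (f : ver A B) (g : ver B C),
      fv F (vcomp g f) = vcomp (fv F g) (fv F f);
  fv_id : forall A : O, fv F (vid A) = vid (fo F A);
  fc_comp : forall (A B C D E G : O) (J : hor A B) (K : hor C D) (L : hor E G)
      (f : ver A C) (g : ver B D) (f' : ver C E) (g' : ver D G)
      (x : cell J K f g) (y : cell K L f' g'),
      ceq (fc F (ccomp x y)) (ccomp (fc F x) (fc F y));
  fc_id : forall (A B : O) (J : hor A B), ceq (fc F (cid J)) (cid (fh F J));
  fh_unit : forall A : O, fh F (hunit A) = hunit (fo F A);
  fc_unit : forall (A C : O) (f : ver A C), ceq (fc F (hunit_cell f)) (hunit_cell (fv F f));
  fcomp_nat : forall (A B C A' B' C' : O) (J : hor A B) (K : hor B C)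
      (J' : hor A' B') (K' : hor B' C') (f : ver A A') (g : ver B B') (h : ver C C')
      (x : cell J J' f g) (y : cell K K' g h),
      ceq (ccomp (hcomp_cell (fc F x) (fc F y)) (fcomp F J' K'))
          (ccomp (fcomp F J K) (fc F (hcomp_cell x y)));
  fcomp_assoc : forall (A B C D : O) (J : hor A B) (K : hor B C) (L : hor C D),
      ceq (ccomp (ccomp (hcomp_cell (fcomp F J K) (cid (fh F L))) (fcomp F (hcomp J K) L))
                 (fc F (assoc J K L)))
          (ccomp (ccomp (assoc (fh F J) (fh F K) (fh F L))
                        (hcomp_cell (cid (fh F J)) (fcomp F K L)))
                 (fcomp F J (hcomp K L)));
  fcomp_lunit : forall (A B : O) (J : hor A B),
      ceq (ccomp (fcomp F (hunit A) J) (fc F (lunit J))) (lunit (fh F J));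
  fcomp_runit : forall (A B : O) (J : hor A B),
      ceq (ccomp (fcomp F J (hunit B)) (fc F (runit J))) (runit (fh F J))
}.

Record MonadData (T : LaxData) := {
  mu_ob : forall A : O, ver (fo T (fo T A)) (fo T A);
  mu_cell : forall (A B : O) (J : hor A B),
      cell (fh T (fh T J)) (fh T J) (mu_ob A) (mu_ob B);
  iota_ob : forall A : O, ver A (fo T A);
  iota_cell : forall (A B : O) (J : hor A B), cell J (fh T J) (iota_ob A) (iota_ob B)
}.

Record MonadAxioms (T : LaxData) (M : MonadData T) : Prop := {
  mu_natv : forall (A B : O) (f : ver A B),
      vcomp (fv T f) (mu_ob M A) = vcomp (mu_ob M B) (fv T (fv T f));
  mu_natc : forall (A B C D : O) (J : hor A B) (K : hor C D) (f : ver A C) (g : ver B D)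
      (x : cell J K f g),
      ceq (ccomp (fc T (fc T x)) (mu_cell M K)) (ccomp (mu_cell M J) (fc T x));
  mu_comp : forall (A B C : O) (J : hor A B) (K : hor B C),
      ceq (ccomp (hcomp_cell (mu_cell M J) (mu_cell M K)) (fcomp T J K))
          (ccomp (ccomp (fcomp T (fh T J) (fh T K)) (fc T (fcomp T J K)))
                 (mu_cell M (hcomp J K)));
  mu_unit : forall A : O, ceq (mu_cell M (hunit A)) (hunit_cell (mu_ob M A));
  iota_natv : forall (A B : O) (f : ver A B),
      vcomp (fv T f) (iota_ob M A) = vcomp (iota_ob M B) f;
  iota_natc : forall (A B C D : O) (J : hor A B) (K : hor C D) (f : ver A C) (g : ver B D)
      (x : cell J K f g),
      ceq (ccomp x (iota_cell M K)) (ccomp (iota_cell M J) (fc T x));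
  iota_comp : forall (A B C : O) (J : hor A B) (K : hor B C),
      ceq (ccomp (hcomp_cell (iota_cell M J) (iota_cell M K)) (fcomp T J K))
          (ccomp (cid (hcomp J K)) (iota_cell M (hcomp J K)));
  iota_unit : forall A : O, ceq (iota_cell M (hunit A)) (hunit_cell (iota_ob M A));
  mon_assoc_ob : forall A : O,
      vcomp (mu_ob M A) (fv T (mu_ob M A)) = vcomp (mu_ob M A) (mu_ob M (fo T A));
  mon_assoc_cell : forall (A B : O) (J : hor A B),
      ceq (ccomp (fc T (mu_cell M J)) (mu_cell M J))
          (ccomp (mu_cell M (fh T J)) (mu_cell M J));
  mon_lunit_ob : forall A : O, vcomp (mu_ob M A) (fv T (iota_ob M A)) = vid (fo T A);
  mon_lunit_cell : forall (A B : O) (J : hor A B),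
      ceq (ccomp (fc T (iota_cell M J)) (mu_cell M J)) (cid (fh T J));
  mon_runit_ob : forall A : O, vcomp (mu_ob M A) (iota_ob M (fo T A)) = vid (fo T A);
  mon_runit_cell : forall (A B : O) (J : hor A B),
      ceq (ccomp (iota_cell M (fh T J)) (mu_cell M J)) (cid (fh T J))
}.

(* the cell  iota_{J*} : J (.) iota_{B*} => iota_{A*} (.) T J : horizontal
   composite of the opcartesian cell 1_A => iota_{A*}, iota_J and the
   cartesian cell iota_{B*} => 1_{TB}, adjusted by unitors/associator *)
Definition iota_star (T : LaxData) (M : MonadData T) (A B : O) (J : hor A B)
  (cA : companion (iota_ob M A)) (cB : companion (iota_ob M B)) :=
  ccomp (lunit_inv (hcomp J (cmp cB)))
    (ccomp (hcomp_cell (cmp_opcart cA) (hcomp_cell (iota_cell M J) (cmp_cart cB)))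
       (ccomp (assoc_inv (cmp cA) (fh T J) (hunit (fo T B)))
              (runit (hcomp (cmp cA) (fh T J))))).

Definition right_BC (T : LaxData) (M : MonadData T) (A B : O) (J : hor A B)
  (cA : companion (iota_ob M A)) (cB : companion (iota_ob M B)) : Prop :=
  hinvertible_up (iota_star J cA cB).

End DoubleCategories.

Record DoubleCat := { dc_data :> DCData; dc_ax : DCAxioms dc_data }.

Definition equipment (K : DoubleCat) : Prop :=
  (forall (A C : ob K) (f : ver A C), inhabited (companion f)) /\
  (forall (A C : ob K) (f : ver A C), inhabited (conjoint f)).

(* Both f_* (.) iota_{C*} and iota_{A*} (.) T f_* are companions of the same
   vertical morphism iota_C o f = T f o iota_A: a companion is the same thing as a
   unit/counit pair satisfying the two zig-zag identities, such pairs compose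
   horizontally, and a normal lax functor preserves them.  A globular cell between
   two companions of one morphism that commutes with their counits is invertible,
   its inverse being the factorisation of one counit through the other; naturality
   of iota shows that iota_{f_* *} commutes with the counits. *)

From Pilot Require Import Defs.
From Stdlib Require Import ClassicalEpsilon Eqdep.
From Corelib Require Import ssreflect ssrbool ssrfun.

Section PackedCells.
Context {DC : DCData}.
Local Notation O := (ob DC).

(* A cell together with its whole boundary; [None] is the value of an
   ill-typed composite, so composition below is total. *)
Definition packed_cell : Type :=
  { A : O & { B : O & { C : O & { D : O & { J : hor A B & { L : hor C D &
  { f : ver A C & { g : ver B D & cell J L f g }}}}}}}}.

Definition pcell : Type := option packed_cell.

Definition pk {A B C D : O} {J : hor A B} {L : hor C D} {f : ver A C} {g : ver B D}
  (x : cell J L f g) : pcell :=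
  Some (existT _ A (existT _ B (existT _ C (existT _ D (existT _ J (existT _ L
    (existT _ f (existT _ g x)))))))).

Ltac inj_existT H :=
  match type of H with existT _ ?a _ = existT _ ?b _ =>
    let E := fresh in
    assert (E : a = b) by exact (f_equal (@projT1 _ _) H);
    first [subst b | subst a | clear E]; apply inj_pair2 in H end.

Ltac inj_pk H := have {}H := Some_inj H; repeat inj_existT H.

Lemma pk_eq_ceq {A B C D : O} {J J' : hor A B} {L L' : hor C D} {f f' : ver A C}
  {g g' : ver B D} (x : cell J L f g) (y : cell J' L' f' g') :
  pk x = pk y -> ceq x y.
Proof. move=> E; inj_pk E; subst; by exists eq_refl, eq_refl, eq_refl, eq_refl. Qed.

Lemma ceq_pk_eq {A B C D : O} {J J' : hor A B} {L L' : hor C D} {f f' : ver A C}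
  {g g' : ver B D} (x : cell J L f g) (y : cell J' L' f' g') :
  ceq x y -> pk x = pk y.
Proof. by move=> [e1 [e2 [e3 [e4 <-]]]]; subst. Qed.

Lemma pk_inj {A B C D : O} {J : hor A B} {L : hor C D} {f : ver A C} {g : ver B D}
  (x y : cell J L f g) : pk x = pk y -> x = y.
Proof.
  move=> /pk_eq_ceq [e1 [e2 [e3 [e4]]]].
  by rewrite (UIP_refl _ _ e1) (UIP_refl _ _ e2) (UIP_refl _ _ e3) (UIP_refl _ _ e4).
Qed.

Lemma pk_ccast {A B C D : O} {J J' : hor A B} {L L' : hor C D} {f f' : ver A C}
  {g g' : ver B D} (e1 : J = J') (e2 : L = L') (e3 : f = f') (e4 : g = g')
  (x : cell J L f g) : pk (ccast e1 e2 e3 e4 x) = pk x.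
Proof. by subst. Qed.

Definition vcomp_graph (m n r : pcell) : Prop :=
  exists (A B C D E F : O) (J : hor A B) (L : hor C D) (N : hor E F)
    (f : ver A C) (g : ver B D) (f' : ver C E) (g' : ver D F)
    (x : cell J L f g) (y : cell L N f' g'), m = pk x /\ n = pk y /\ r = pk (ccomp x y).

Definition hcomp_graph (m n r : pcell) : Prop :=
  exists (A B C A' B' C' : O) (J : hor A B) (J' : hor B C) (L : hor A' B') (L' : hor B' C')
    (f : ver A A') (g : ver B B') (h : ver C C')
    (x : cell J L f g) (y : cell J' L' g h), m = pk x /\ n = pk y /\ r = pk (hcomp_cell x y).

Lemma vcomp_graph_fun m n r r' : vcomp_graph m n r -> vcomp_graph m n r' -> r = r'.
Proof.
  intros (A&B&C&D&E&F&J&L&N&f&g&f'&g'&x&y&->&->&->)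
         (A0&B0&C0&D0&E0&F0&J0&L0&N0&f0&g0&f0'&g0'&x0&y0&E1&E2&->).
  inj_pk E1; inj_pk E2; by subst.
Qed.

Lemma hcomp_graph_fun m n r r' : hcomp_graph m n r -> hcomp_graph m n r' -> r = r'.
Proof.
  intros (A&B&C&A'&B'&C'&J&J'&L&L'&f&g&h&x&y&->&->&->)
         (A0&B0&C0&A0'&B0'&C0'&J0&J0'&L0&L0'&f0&g0&h0&x0&y0&E1&E2&->).
  inj_pk E1; inj_pk E2; by subst.
Qed.

Definition graph_value (G : pcell -> Prop) : pcell :=
  match excluded_middle_informative (exists r, G r) with
  | left H => proj1_sig (constructive_indefinite_description _ H)
  | right _ => None
  end.

Lemma graph_valueP (G : pcell -> Prop) r :
  (forall r', G r' -> r' = r) -> G r -> graph_value G = r.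
Proof.
  rewrite /graph_value => uniq Gr; case: excluded_middle_informative => [H|[]]; last by exists r.
  by case: constructive_indefinite_description => r0 /= /uniq.
Qed.

Lemma graph_value_Some (G : pcell -> Prop) r : graph_value G = Some r -> G (Some r).
Proof.
  rewrite /graph_value; case: excluded_middle_informative => [H|//].
  by case: constructive_indefinite_description => r' /= Gr <-.
Qed.

Definition pvcomp (m n : pcell) : pcell := graph_value (vcomp_graph m n).
Definition phcomp (m n : pcell) : pcell := graph_value (hcomp_graph m n).

Lemma pvcomp_pk {A B C D E F : O} {J : hor A B} {L : hor C D} {N : hor E F}
    {f : ver A C} {g : ver B D} {f' : ver C E} {g' : ver D F}
    (x : cell J L f g) (y : cell L N f' g') : pvcomp (pk x) (pk y) = pk (ccomp x y).
Proof.
  have G : vcomp_graph (pk x) (pk y) (pk (ccomp x y)) by do 15 eexists.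
  apply: graph_valueP (G) => r' G'; exact: vcomp_graph_fun G' G.
Qed.

Lemma phcomp_pk {A B C A' B' C' : O} {J : hor A B} {J' : hor B C} {L : hor A' B'}
    {L' : hor B' C'} {f : ver A A'} {g : ver B B'} {h : ver C C'}
    (x : cell J L f g) (y : cell J' L' g h) : phcomp (pk x) (pk y) = pk (hcomp_cell x y).
Proof.
  have G : hcomp_graph (pk x) (pk y) (pk (hcomp_cell x y)) by do 15 eexists.
  apply: graph_valueP (G) => r' G'; exact: hcomp_graph_fun G' G.
Qed.

Lemma composable_triple a b c r :
  pvcomp (pvcomp a b) c = Some r \/ pvcomp a (pvcomp b c) = Some r ->
  exists (A B C D E F G H : O) (J : hor A B) (L : hor C D) (N : hor E F) (Q : hor G H)
    (f1 : ver A C) (g1 : ver B D) (f2 : ver C E) (g2 : ver D F) (f3 : ver E G) (g3 : ver F H)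
    (x : cell J L f1 g1) (y : cell L N f2 g2) (z : cell N Q f3 g3),
    a = pk x /\ b = pk y /\ c = pk z.
Proof.
  case=> /graph_value_Some; intros (A&B&C&D&E&F&J&L&N&f&g&f'&g'&x&y&Hm&Hn&_).
  - case Eab: (pvcomp a b) Hm => [p|//] Hm.
    move: Eab => /graph_value_Some.
    intros (A0&B0&C0&D0&E0&F0&J0&L0&N0&f0&g0&f0'&g0'&x0&y0&->&->&E1).
    rewrite E1 in Hm; inj_pk Hm; subst; do 21 eexists; eauto.
  - case Ebc: (pvcomp b c) Hn => [p|//] Hn.
    move: Ebc => /graph_value_Some.
    intros (A0&B0&C0&D0&E0&F0&J0&L0&N0&f0&g0&f0'&g0'&x0&y0&->&->&E1).
    rewrite E1 in Hn; inj_pk Hn; subst; do 21 eexists; eauto.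
Qed.

Lemma pvcompA (AX : DCAxioms DC) a b c : pvcomp (pvcomp a b) c = pvcomp a (pvcomp b c).
Proof.
  case E1: (pvcomp (pvcomp a b) c) => [r|]; case E2: (pvcomp a (pvcomp b c)) => [r'|] //.
  - destruct (composable_triple a b c r (or_introl E1))
      as (A&B&C&D&E&F&G&H&J&L&N&Q&f1&g1&f2&g2&f3&g3&x&y&z&Ha&Hb&Hc).
    subst; rewrite !pvcomp_pk in E1 E2; rewrite -E1 -E2.
    exact/ceq_pk_eq/(ccomp_assoc AX).
  - destruct (composable_triple a b c r (or_introl E1))
      as (A&B&C&D&E&F&G&H&J&L&N&Q&f1&g1&f2&g2&f3&g3&x&y&z&Ha&Hb&Hc).
    by subst; rewrite !pvcomp_pk in E2.
  - destruct (composable_triple a b c r' (or_intror E2))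
      as (A&B&C&D&E&F&G&H&J&L&N&Q&f1&g1&f2&g2&f3&g3&x&y&z&Ha&Hb&Hc).
    by subst; rewrite !pvcomp_pk in E1.
Qed.

End PackedCells.

Notation "a ;; b" := (pvcomp a b) (at level 50, left associativity).
Notation "a ** b" := (phcomp a b) (at level 40, left associativity).
Notation pcid J := (pk (cid J)).

Definition is_cell {DC : DCData} (m : pcell) {A B C D : ob DC}
  (J : hor A B) (L : hor C D) (f : ver A C) (g : ver B D) : Prop :=
  exists x : cell J L f g, m = pk x.

Definition pfc {DC : DCData} (T : LaxData DC) (m : pcell) : pcell :=
  match m with
  | Some (existT _ _ (existT _ _ (existT _ _ (existT _ _ (existT _ _ (existT _ _
      (existT _ _ (existT _ _ x)))))))) => pk (fc T x)
  | None => None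
  end.

Section Typing.
Context {DC : DCData}.
Local Notation O := (ob DC).

Lemma is_cell_pk {A B C D : O} {J : hor A B} {L : hor C D} {f : ver A C} {g : ver B D}
  (x : cell J L f g) : is_cell (pk x) J L f g.
Proof. by exists x. Qed.

Lemma is_cell_pvcomp {A B C D E F : O} {J : hor A B} {L L' : hor C D} {N : hor E F}
    {f : ver A C} {g : ver B D} {f' : ver C E} {g' : ver D F} m n :
  is_cell m J L f g -> is_cell n L' N f' g' -> L = L' ->
  is_cell (m ;; n) J N (vcomp f' f) (vcomp g' g).
Proof. move=> [x ->] [y ->] Eq; subst; exists (ccomp x y); exact: pvcomp_pk. Qed.

Lemma is_cell_phcomp {A B C A' B' C' : O} {J : hor A B} {J' : hor B C} {L : hor A' B'}
    {L' : hor B' C'} {f : ver A A'} {g g' : ver B B'} {h : ver C C'} m n :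
  is_cell m J L f g -> is_cell n J' L' g' h -> g = g' ->
  is_cell (m ** n) (hcomp J J') (hcomp L L') f h.
Proof. move=> [x ->] [y ->] Eq; subst; exists (hcomp_cell x y); exact: phcomp_pk. Qed.

Lemma is_cell_pfc (T : LaxData DC) {A B C D : O} {J : hor A B} {L : hor C D}
  {f : ver A C} {g : ver B D} m :
  is_cell m J L f g -> is_cell (pfc T m) (fh T J) (fh T L) (fv T f) (fv T g).
Proof. by move=> [x ->]; exists (fc T x). Qed.

Lemma is_cell_conv {A B C D : O} {J J' : hor A B} {L L' : hor C D} {f f' : ver A C}
  {g g' : ver B D} m :
  is_cell m J L f g -> J = J' -> L = L' -> f = f' -> g = g' -> is_cell m J' L' f' g'.
Proof. by move=> ? <- <- <- <-. Qed.

Lemma pk_hinvertible_up {A B : O} {J K : hor A B} {f : ver A A} {g : ver B B}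
  (x : cell J K f g) X :
  pk x = X -> is_cell X J K (vid A) (vid B) ->
  (exists Y, [/\ is_cell Y K J (vid A) (vid B), X ;; Y = pcid J & Y ;; X = pcid K]) ->
  hinvertible_up x.
Proof.
  move=> Ex [x' Ex'] [Y [[y ->] EXY EYX]]; subst X.
  exists x'; split; first exact: pk_eq_ceq.
  by exists y; split; apply: pk_eq_ceq; rewrite -pvcomp_pk -Ex'.
Qed.

End Typing.

(* Boundaries of packed cells are only equal up to the unit laws of vertical
   composition and the strictness of [T] and [iota]; [vnorm] decides them. *)
Ltac vnorm := first [ reflexivity | repeat (match goal with
  | AX : DCAxioms _ |- _ => first [rewrite (vcomp_idl AX) | rewrite (vcomp_idr AX)]
  | HT : NormalLax _ |- _ => first [rewrite (fv_id HT) | rewrite (fh_unit HT)]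
  | HM : MonadAxioms _ |- _ => rewrite (iota_natv HM)
  end); reflexivity ].

Ltac unpack := repeat match goal with H : is_cell _ _ _ _ _ |- _ => destruct H as [? ->] end.

Ltac cellcheck := lazymatch goal with
  | |- is_cell (pvcomp _ _) _ _ _ _ => eapply is_cell_pvcomp; [cellcheck | cellcheck | vnorm]
  | |- is_cell (phcomp _ _) _ _ _ _ => eapply is_cell_phcomp; [cellcheck | cellcheck | vnorm]
  | |- is_cell (pfc _ _) _ _ _ _ => eapply is_cell_pfc; cellcheck
  | |- is_cell (pk _) _ _ _ _ => eapply is_cell_pk
  | |- is_cell _ _ _ _ _ => eassumption
  end.

Ltac typecheck := eapply is_cell_conv; [cellcheck | vnorm | vnorm | vnorm | vnorm].

Tactic Notation "trw" uconstr(t) :=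
  unshelve erewrite t; [idtac | try (solve [typecheck]) ..].
Tactic Notation "trw" "<-" uconstr(t) :=
  unshelve erewrite <- t; [idtac | try (solve [typecheck]) ..].

Section PackedLaws.
Context {DC : DCData} (AX : DCAxioms DC).
Local Notation O := (ob DC).

Lemma pvcomp_idl {A B C D : O} {J : hor A B} {L : hor C D} {f : ver A C} {g : ver B D} m :
  is_cell m J L f g -> pcid J ;; m = m.
Proof. move=> ?; unpack; rewrite pvcomp_pk; exact/ceq_pk_eq/(ccomp_idl AX). Qed.

Lemma pvcomp_idr {A B C D : O} {J : hor A B} {L : hor C D} {f : ver A C} {g : ver B D} m :
  is_cell m J L f g -> m ;; pcid L = m.
Proof. move=> ?; unpack; rewrite pvcomp_pk; exact/ceq_pk_eq/(ccomp_idr AX). Qed.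

Lemma interchange_pk {A1 B1 C1 A2 B2 C2 A3 B3 C3 : O}
    {J : hor A1 B1} {J' : hor B1 C1} {K : hor A2 B2} {K' : hor B2 C2}
    {L : hor A3 B3} {L' : hor B3 C3}
    {f : ver A1 A2} {g : ver B1 B2} {h : ver C1 C2}
    {f' : ver A2 A3} {g' : ver B2 B3} {h' : ver C2 C3} a b c d :
  is_cell a J K f g -> is_cell b K L f' g' -> is_cell c J' K' g h -> is_cell d K' L' g' h' ->
  (a ;; b) ** (c ;; d) = (a ** c) ;; (b ** d).
Proof. by move=> ????; unpack; rewrite !pvcomp_pk !phcomp_pk pvcomp_pk (Defs.interchange AX). Qed.

Lemma hcomp_cid_pk {A B C : O} (J : hor A B) (L : hor B C) :
  pcid J ** pcid L = pcid (hcomp J L).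
Proof. by rewrite phcomp_pk (hcomp_cid AX). Qed.

Lemma hunit_cell_id_pk (A : O) : pk (hunit_cell (vid A)) = pcid (hunit A).
Proof. by rewrite (hunit_cell_id AX). Qed.

Lemma hunit_cell_comp_pk {A B C : O} (f : ver A B) (g : ver B C) :
  pk (hunit_cell (vcomp g f)) = pk (hunit_cell f) ;; pk (hunit_cell g).
Proof. by rewrite pvcomp_pk (hunit_cell_comp AX). Qed.

Lemma assoc_iso1_pk {A B C D : O} (J : hor A B) (K : hor B C) (L : hor C D) :
  pk (assoc J K L) ;; pk (assoc_inv J K L) = pcid (hcomp (hcomp J K) L).
Proof. rewrite pvcomp_pk; exact/ceq_pk_eq/(assoc_iso1 AX). Qed.

Lemma assoc_iso2_pk {A B C D : O} (J : hor A B) (K : hor B C) (L : hor C D) :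
  pk (assoc_inv J K L) ;; pk (assoc J K L) = pcid (hcomp J (hcomp K L)).
Proof. rewrite pvcomp_pk; exact/ceq_pk_eq/(assoc_iso2 AX). Qed.

Lemma lunit_iso1_pk {A B : O} (J : hor A B) :
  pk (lunit J) ;; pk (lunit_inv J) = pcid (hcomp (hunit A) J).
Proof. rewrite pvcomp_pk; exact/ceq_pk_eq/(lunit_iso1 AX). Qed.

Lemma lunit_iso2_pk {A B : O} (J : hor A B) : pk (lunit_inv J) ;; pk (lunit J) = pcid J.
Proof. rewrite pvcomp_pk; exact/ceq_pk_eq/(lunit_iso2 AX). Qed.

Lemma runit_iso1_pk {A B : O} (J : hor A B) :
  pk (runit J) ;; pk (runit_inv J) = pcid (hcomp J (hunit B)).
Proof. rewrite pvcomp_pk; exact/ceq_pk_eq/(runit_iso1 AX). Qed.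

Lemma runit_iso2_pk {A B : O} (J : hor A B) : pk (runit_inv J) ;; pk (runit J) = pcid J.
Proof. rewrite pvcomp_pk; exact/ceq_pk_eq/(runit_iso2 AX). Qed.

Lemma assoc_nat_pk {A B C E A' B' C' E' : O}
    {J : hor A B} {K : hor B C} {L : hor C E} {J' : hor A' B'} {K' : hor B' C'}
    {L' : hor C' E'} {f : ver A A'} {g : ver B B'} {h : ver C C'} {k : ver E E'} x y z :
  is_cell x J J' f g -> is_cell y K K' g h -> is_cell z L L' h k ->
  (x ** y) ** z ;; pk (assoc J' K' L') = pk (assoc J K L) ;; (x ** (y ** z)).
Proof. move=> ???; unpack; rewrite !phcomp_pk !pvcomp_pk; exact/ceq_pk_eq/(assoc_nat AX). Qed.

Lemma lunit_nat_pk {A B A' B' : O} {J : hor A B} {J' : hor A' B'} {f : ver A A'}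
  {g : ver B B'} x :
  is_cell x J J' f g -> pk (hunit_cell f) ** x ;; pk (lunit J') = pk (lunit J) ;; x.
Proof. move=> ?; unpack; rewrite !phcomp_pk !pvcomp_pk; exact/ceq_pk_eq/(lunit_nat AX). Qed.

Lemma runit_nat_pk {A B A' B' : O} {J : hor A B} {J' : hor A' B'} {f : ver A A'}
  {g : ver B B'} x :
  is_cell x J J' f g -> x ** pk (hunit_cell g) ;; pk (runit J') = pk (runit J) ;; x.
Proof. move=> ?; unpack; rewrite !phcomp_pk !pvcomp_pk; exact/ceq_pk_eq/(runit_nat AX). Qed.

Lemma pentagon_pk {A B C D E : O} (J : hor A B) (K : hor B C) (L : hor C D) (N : hor D E) :
  pk (assoc (hcomp J K) L N) ;; pk (assoc J K (hcomp L N)) =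
  pk (assoc J K L) ** pcid N ;; pk (assoc J (hcomp K L) N) ;; pcid J ** pk (assoc K L N).
Proof. rewrite !phcomp_pk !pvcomp_pk; exact/ceq_pk_eq/(pentagon AX). Qed.

Lemma triangle_pk {A B C : O} (J : hor A B) (K : hor B C) :
  pk (assoc J (hunit B) K) ;; pcid J ** pk (lunit K) = pk (runit J) ** pcid K.
Proof. rewrite !phcomp_pk !pvcomp_pk; exact/ceq_pk_eq/(triangle AX). Qed.

End PackedLaws.

Section Coherence.
Context {DC : DCData} (AX : DCAxioms DC).
Local Notation O := (ob DC).

Lemma pvcomp_prefix2 {a b c r : @pcell DC} : a ;; b = c -> a ;; (b ;; r) = c ;; r.
Proof. by move=> <-; rewrite (pvcompA AX). Qed.

Lemma pvcomp_prefix3 {a b c d r : @pcell DC} : a ;; b ;; c = d -> a ;; (b ;; (c ;; r)) = d ;; r.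
Proof. by move=> <-; rewrite !(pvcompA AX). Qed.

Lemma pvcomp_inj_l {A B C D : O} {X : hor A B} {Y : hor C D} {f : ver A C} {g : ver B D}
  (w w' m n : @pcell DC) :
  is_cell m X Y f g -> is_cell n X Y f g -> w' ;; w = pcid X -> w ;; m = w ;; n -> m = n.
Proof.
  move=> Hm Hn Hw E.
  by rewrite -(pvcomp_idl AX _ Hm) -(pvcomp_idl AX _ Hn) -Hw !(pvcompA AX) E.
Qed.

Lemma pvcomp_inj_r {A B C D : O} {X : hor A B} {Y : hor C D} {f : ver A C} {g : ver B D}
  (w w' m n : @pcell DC) :
  is_cell m X Y f g -> is_cell n X Y f g -> w ;; w' = pcid Y -> m ;; w = n ;; w -> m = n.
Proof.
  move=> Hm Hn Hw E.
  by rewrite -(pvcomp_idr AX _ Hm) -(pvcomp_idr AX _ Hn) -Hw -!(pvcompA AX) E.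
Qed.

Lemma whiskerl_pvcomp {Z A B : O} (X : hor Z A) {J L N : hor A B} a b :
  is_cell a J L (vid A) (vid B) -> is_cell b L N (vid A) (vid B) ->
  pcid X ** (a ;; b) = (pcid X ** a) ;; (pcid X ** b).
Proof.
  move=> Ha Hb; rewrite -{1}(pvcomp_idl AX (pcid X) (is_cell_pk _)).
  by trw (interchange_pk AX).
Qed.

Lemma whiskerr_pvcomp {A A1 A2 B Z : O} (X : hor B Z) {J : hor A B} {L : hor A1 B}
  {N : hor A2 B} {f : ver A A1} {f' : ver A1 A2} a b :
  is_cell a J L f (vid B) -> is_cell b L N f' (vid B) ->
  (a ;; b) ** pcid X = (a ** pcid X) ;; (b ** pcid X).
Proof.
  move=> Ha Hb; rewrite -{1}(pvcomp_idl AX (pcid X) (is_cell_pk _)).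
  by trw (interchange_pk AX).
Qed.

Lemma phcomp_pcid_hunit_l_inj {A B : O} {J L : hor A B} m n :
  is_cell m J L (vid A) (vid B) -> is_cell n J L (vid A) (vid B) ->
  pcid (hunit A) ** m = pcid (hunit A) ** n -> m = n.
Proof.
  have expand m' : is_cell m' J L (vid A) (vid B) ->
      m' = pk (lunit_inv J) ;; (pcid (hunit A) ** m' ;; pk (lunit L)).
  { move=> Hm'; rewrite -(hunit_cell_id_pk AX A) (lunit_nat_pk AX _ Hm').
    by rewrite -(pvcompA AX) (lunit_iso2_pk AX) (pvcomp_idl AX _ Hm'). }
  by move=> Hm Hn E; rewrite (expand _ Hm) (expand _ Hn) E.
Qed.

Lemma phcomp_pcid_hunit_r_inj {A B : O} {J L : hor A B} m n :
  is_cell m J L (vid A) (vid B) -> is_cell n J L (vid A) (vid B) ->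
  m ** pcid (hunit B) = n ** pcid (hunit B) -> m = n.
Proof.
  have expand m' : is_cell m' J L (vid A) (vid B) ->
      m' = pk (runit_inv J) ;; (m' ** pcid (hunit B) ;; pk (runit L)).
  { move=> Hm'; rewrite -(hunit_cell_id_pk AX B) (runit_nat_pk AX _ Hm').
    by rewrite -(pvcompA AX) (runit_iso2_pk AX) (pvcomp_idl AX _ Hm'). }
  by move=> Hm Hn E; rewrite (expand _ Hm) (expand _ Hn) E.
Qed.

(* Kelly's redundant coherence axioms, derived from the pentagon and the triangle. *)
Lemma assoc_lunit_pk {A B C : O} (J : hor A B) (K : hor B C) :
  pk (assoc (hunit A) J K) ;; pk (lunit (hcomp J K)) = pk (lunit J) ** pcid K.
Proof.
  apply: phcomp_pcid_hunit_l_inj; [typecheck | typecheck |].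
  apply: (pvcomp_inj_l
    (pk (assoc (hunit A) (hunit A) J) ** pcid K ;; pk (assoc (hunit A) (hcomp (hunit A) J) K))
    (pk (assoc_inv (hunit A) (hcomp (hunit A) J) K) ;; pk (assoc_inv (hunit A) (hunit A) J) ** pcid K));
    [typecheck | typecheck | |].
  { rewrite !(pvcompA AX) (pvcomp_prefix2 (esym (whiskerr_pvcomp _ _ _ (is_cell_pk _) (is_cell_pk _)))).
    rewrite (assoc_iso2_pk AX) (hcomp_cid_pk AX) (pvcomp_idl AX _ (is_cell_pk _)).
    exact: assoc_iso2_pk. }
  trw whiskerl_pvcomp.
  rewrite !(pvcompA AX) (pvcomp_prefix3 (esym (pentagon_pk AX _ _ _ _))) !(pvcompA AX).
  rewrite (triangle_pk AX (hunit A) (hcomp J K)) -(hcomp_cid_pk AX J K).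
  trw <- (assoc_nat_pk AX (J := hcomp (hunit A) (hunit A)) (K := J) (L := K)).
  rewrite -(triangle_pk AX (hunit A) J).
  trw whiskerr_pvcomp; rewrite !(pvcompA AX).
  by trw (assoc_nat_pk AX (J := hunit A) (K := hcomp (hunit A) J) (L := K)).
Qed.

Lemma lunit_runit_hunit (A : O) : pk (lunit (hunit A)) = pk (runit (hunit A)).
Proof.
  have E : pk (lunit (hcomp (hunit A) (hunit A))) = pcid (hunit A) ** pk (lunit (hunit A)).
  { apply: (pvcomp_inj_r (pk (lunit (hunit A))) (pk (lunit_inv (hunit A))));
      [typecheck | typecheck | exact: lunit_iso1_pk |].
    rewrite -(hunit_cell_id_pk AX A); by trw (lunit_nat_pk AX). }
  apply: phcomp_pcid_hunit_r_inj; [typecheck | typecheck |].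
  by rewrite -(assoc_lunit_pk (hunit A) (hunit A)) E (triangle_pk AX (hunit A) (hunit A)).
Qed.

Lemma assoc_runit_pk {A B C : O} (J : hor A B) (K : hor B C) :
  pk (assoc J K (hunit C)) ;; pcid J ** pk (runit K) = pk (runit (hcomp J K)).
Proof.
  apply: phcomp_pcid_hunit_r_inj; [typecheck | typecheck |].
  trw whiskerr_pvcomp.
  apply: (pvcomp_inj_r (pk (assoc J K (hunit C))) (pk (assoc_inv J K (hunit C))));
    [typecheck | typecheck | exact: assoc_iso1_pk |].
  rewrite !(pvcompA AX).
  trw (assoc_nat_pk AX (J' := J) (K' := K) (L' := hunit C)).
  rewrite -(triangle_pk AX K (hunit C)).
  trw (whiskerl_pvcomp J).
  rewrite -!(pvcompA AX) -(pentagon_pk AX J K (hunit C) (hunit C)) !(pvcompA AX).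
  trw <- (assoc_nat_pk AX (J := J) (K := K) (L := hcomp (hunit C) (hunit C))).
  by rewrite (hcomp_cid_pk AX J K) -(pvcompA AX) (triangle_pk AX (hcomp J K) (hunit C)).
Qed.

Lemma assoc_inv_lunit_pk {A B C : O} (J : hor A B) (K : hor B C) :
  pk (assoc_inv (hunit A) J K) ;; pk (lunit J) ** pcid K = pk (lunit (hcomp J K)).
Proof.
  rewrite -assoc_lunit_pk -(pvcompA AX) (assoc_iso2_pk AX).
  exact: pvcomp_idl (is_cell_pk _).
Qed.

Lemma runit_inv_assoc_inv_pk {A B C : O} (J : hor A B) (K : hor B C) :
  pcid J ** pk (runit_inv K) ;; pk (assoc_inv J K (hunit C)) = pk (runit_inv (hcomp J K)).
Proof.
  apply: (pvcomp_inj_r (pk (runit (hcomp J K))) (pk (runit_inv (hcomp J K))));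
    [typecheck | typecheck | exact: runit_iso1_pk |].
  rewrite (runit_iso2_pk AX (hcomp J K)) -(assoc_runit_pk J K) !(pvcompA AX).
  rewrite (pvcomp_prefix2 (assoc_iso2_pk AX J K (hunit C))).
  trw (pvcomp_idl AX (pcid J ** pk (runit K))).
  trw <- (whiskerl_pvcomp J).
  by rewrite (runit_iso2_pk AX K) (hcomp_cid_pk AX).
Qed.

Lemma lunit_inv_nat_pk {A B A' B' : O} {J : hor A B} {J' : hor A' B'} {f : ver A A'}
  {g : ver B B'} x :
  is_cell x J J' f g -> pk (lunit_inv J) ;; (pk (hunit_cell f) ** x) = x ;; pk (lunit_inv J').
Proof.
  move=> Hx.
  apply: (pvcomp_inj_r (pk (lunit J')) (pk (lunit_inv J')));
    [typecheck | typecheck | exact: lunit_iso1_pk |].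
  rewrite !(pvcompA AX) (lunit_nat_pk AX _ Hx) -(pvcompA AX) (lunit_iso2_pk AX).
  by rewrite (pvcomp_idl AX _ Hx) (lunit_iso2_pk AX) (pvcomp_idr AX _ Hx).
Qed.

Lemma phcomp_reassoc_l {A B C E A' B' C' E' : O}
    {J : hor A B} {K : hor B C} {L : hor C E} {J' : hor A' B'} {K' : hor B' C'}
    {L' : hor C' E'} {f : ver A A'} {g : ver B B'} {h : ver C C'} {k : ver E E'} x y z :
  is_cell x J J' f g -> is_cell y K K' g h -> is_cell z L L' h k ->
  (x ** y) ** z = pk (assoc J K L) ;; (x ** (y ** z)) ;; pk (assoc_inv J' K' L').
Proof.
  move=> Hx Hy Hz.
  rewrite -(assoc_nat_pk AX _ _ _ Hx Hy Hz) (pvcompA AX) (assoc_iso1_pk AX).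
  by trw (pvcomp_idr AX).
Qed.

Lemma phcomp_reassoc_r {A B C E A' B' C' E' : O}
    {J : hor A B} {K : hor B C} {L : hor C E} {J' : hor A' B'} {K' : hor B' C'}
    {L' : hor C' E'} {f : ver A A'} {g : ver B B'} {h : ver C C'} {k : ver E E'} x y z :
  is_cell x J J' f g -> is_cell y K K' g h -> is_cell z L L' h k ->
  x ** (y ** z) = pk (assoc_inv J K L) ;; ((x ** y) ** z) ;; pk (assoc J' K' L').
Proof.
  move=> Hx Hy Hz.
  rewrite (pvcompA AX) (assoc_nat_pk AX _ _ _ Hx Hy Hz) -(pvcompA AX) (assoc_iso2_pk AX).
  by trw (pvcomp_idl AX).
Qed.

Lemma assoc_inv_nat_pk {A B C E A' B' C' E' : O}
    {J : hor A B} {K : hor B C} {L : hor C E} {J' : hor A' B'} {K' : hor B' C'}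
    {L' : hor C' E'} {f : ver A A'} {g : ver B B'} {h : ver C C'} {k : ver E E'} x y z :
  is_cell x J J' f g -> is_cell y K K' g h -> is_cell z L L' h k ->
  pk (assoc_inv J K L) ;; ((x ** y) ** z) = (x ** (y ** z)) ;; pk (assoc_inv J' K' L').
Proof.
  move=> Hx Hy Hz.
  rewrite (phcomp_reassoc_l _ _ _ Hx Hy Hz) -!(pvcompA AX) (assoc_iso2_pk AX).
  by trw (pvcomp_idl AX).
Qed.

Lemma phcomp_hunit_cell_l {A B A' B' : O} {J : hor A B} {J' : hor A' B'} {f : ver A A'}
  {g : ver B B'} x :
  is_cell x J J' f g -> pk (hunit_cell f) ** x = pk (lunit J) ;; x ;; pk (lunit_inv J').
Proof.
  move=> Hx; rewrite -(lunit_nat_pk AX _ Hx) (pvcompA AX) (lunit_iso1_pk AX).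
  by trw (pvcomp_idr AX).
Qed.

Lemma phcomp_hunit_cell_r {A B A' B' : O} {J : hor A B} {J' : hor A' B'} {f : ver A A'}
  {g : ver B B'} x :
  is_cell x J J' f g -> x ** pk (hunit_cell g) = pk (runit J) ;; x ;; pk (runit_inv J').
Proof.
  move=> Hx; rewrite -(runit_nat_pk AX _ Hx) (pvcompA AX) (runit_iso1_pk AX).
  by trw (pvcomp_idr AX).
Qed.

Lemma phcomp_pvcomp_split {A B C D E G H1 : O} {J : hor A B} {K : hor C D} {f : ver A C}
  {g : ver B D} {J1 : hor B E} {K1 : hor B E} {L1 : hor D G} {N1 : hor D H1}
  {h : ver E G} {k : ver G H1} e X1 Y X2 :
  is_cell e J K f g -> is_cell X1 J1 K1 (vid B) (vid E) -> is_cell Y K1 L1 g h ->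
  is_cell X2 L1 N1 (vid D) k ->
  e ** (X1 ;; (Y ;; X2)) = (pcid J ** X1) ;; ((e ** Y) ;; (pcid K ** X2)).
Proof.
  move=> He HX1 HY HX2.
  rewrite -{1}(pvcomp_idl AX _ He) -{1}(pvcomp_idr AX _ He).
  trw (interchange_pk AX (pcid J) (e ;; pcid K) X1 (Y ;; X2)).
  by trw (interchange_pk AX e (pcid K) Y X2).
Qed.

Lemma phcomp_pvcomp_ends {A B C A' B' C' : O} {J K : hor A B} {L : hor A' B'}
  {J' : hor B C} {K' L' : hor B' C'} {f : ver A A'} {g : ver B B'} {h : ver C C'} u x y v :
  is_cell u J K (vid A) (vid B) -> is_cell x K L f g -> is_cell y J' K' g h ->
  is_cell v K' L' (vid B') (vid C') ->
  (u ;; x) ** (y ;; v) = (u ** pcid J') ;; ((x ** y) ;; (pcid L ** v)).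
Proof.
  move=> Hu Hx Hy Hv.
  trw <- (interchange_pk AX x (pcid L) y v); rewrite (pvcomp_idr AX _ Hx).
  by trw <- (interchange_pk AX u x (pcid J') (y ;; v)); trw (pvcomp_idl AX (y ;; v)).
Qed.

Lemma hunit_cell_phcomp_swap {A B C : O} {F : hor A B} {G : hor B C} {p : ver A B}
  {q : ver B C} e t :
  is_cell e F (hunit B) p (vid B) -> is_cell t (hunit B) G (vid B) q ->
  (pk (hunit_cell p) ;; t) ** (e ;; pk (hunit_cell q)) =
  pk (lunit F) ;; (e ;; (t ;; pk (runit_inv G))).
Proof.
  move=> He Ht.
  trw (interchange_pk AX (pk (hunit_cell p)) t e (pk (hunit_cell q))).
  rewrite (phcomp_hunit_cell_l _ He) (phcomp_hunit_cell_r _ Ht) !(pvcompA AX).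
  rewrite -(lunit_runit_hunit B) (pvcomp_prefix2 (lunit_iso2_pk AX (hunit B))).
  by trw (pvcomp_idl AX (t ;; pk (runit_inv G))).
Qed.

Lemma runit_inv_assoc_lunit_pk {A B C : O} (F : hor A B) (G : hor B C) :
  pk (runit_inv F) ** pcid G ;; pk (assoc F (hunit B) G) ;; pcid F ** pk (lunit G) =
  pcid (hcomp F G).
Proof.
  rewrite (pvcompA AX) (triangle_pk AX F G).
  trw <- (whiskerr_pvcomp G (pk (runit_inv F))).
  by rewrite (runit_iso2_pk AX) (hcomp_cid_pk AX).
Qed.

Lemma lunit_inv_assoc_lunit_pk {A B : O} (X : hor A B) :
  pk (lunit_inv (hunit A)) ** pcid X ;; pk (assoc (hunit A) (hunit A) X) ;;
  pcid (hunit A) ** pk (lunit X) = pcid (hcomp (hunit A) X).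
Proof.
  rewrite (pvcompA AX) (triangle_pk AX (hunit A) X).
  trw <- (whiskerr_pvcomp X (pk (lunit_inv (hunit A)))).
  by rewrite -(lunit_runit_hunit A) (lunit_iso2_pk AX) (hcomp_cid_pk AX).
Qed.

Lemma runit_inv_assoc_hunit_pk {B C : O} (G : hor B C) :
  pk (runit_inv G) ** pcid (hunit C) ;; pk (assoc G (hunit C) (hunit C)) =
  pcid G ** pk (lunit_inv (hunit C)).
Proof.
  apply: (pvcomp_inj_r (pcid G ** pk (lunit (hunit C))) (pcid G ** pk (lunit_inv (hunit C))));
    [typecheck | typecheck | |].
  { trw <- (whiskerl_pvcomp G); by rewrite (lunit_iso1_pk AX) (hcomp_cid_pk AX). }
  rewrite (pvcompA AX) (triangle_pk AX G (hunit C)).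
  trw <- (whiskerr_pvcomp (hunit C) (pk (runit_inv G))).
  trw <- (whiskerl_pvcomp G).
  by rewrite (runit_iso2_pk AX) (lunit_iso2_pk AX) !(hcomp_cid_pk AX).
Qed.

Lemma runit_inv_hcomp_expand {A B C : O} (F : hor A B) (G : hor B C) :
  pcid F ** pk (runit_inv G) ;; (pcid F ** (pk (runit_inv G) ** pcid (hunit C)) ;;
   (pcid F ** pk (assoc G (hunit C) (hunit C)) ;;
    (pk (assoc_inv F G (hcomp (hunit C) (hunit C))) ;;
     pcid (hcomp F G) ** pk (lunit (hunit C))))) =
  pk (runit_inv (hcomp F G)).
Proof.
  trw (pvcomp_prefix2 (esym (whiskerl_pvcomp F (pk (runit_inv G) ** pcid (hunit C))
                                          (pk (assoc G (hunit C) (hunit C))) _ _))).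
  rewrite (runit_inv_assoc_hunit_pk G) -(hcomp_cid_pk AX F G).
  trw (assoc_inv_nat_pk (pcid F) (pcid G) (pk (lunit (hunit C)))).
  rewrite -(pvcompA AX) (pvcompA AX) -(pvcompA AX (pcid F ** (pcid G ** pk (lunit_inv (hunit C))))).
  trw <- (whiskerl_pvcomp F (pcid G ** pk (lunit_inv (hunit C))) (pcid G ** pk (lunit (hunit C)))).
  trw <- (whiskerl_pvcomp G (pk (lunit_inv (hunit C))) (pk (lunit (hunit C)))).
  rewrite (lunit_iso2_pk AX) !(hcomp_cid_pk AX).
  trw (pvcomp_idl AX).
  exact: runit_inv_assoc_inv_pk.
Qed.

End Coherence.

Section CompanionPairs.
Context {DC : DCData} (AX : DCAxioms DC).
Local Notation O := (ob DC).

Definition companion_pair {A B : O} (F : hor A B) (p : ver A B) (eta eps : @pcell DC) :=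
  [/\ is_cell eta (hunit A) F (vid A) p, is_cell eps F (hunit B) p (vid B),
      eta ;; eps = pk (hunit_cell p) &
      pk (lunit_inv F) ;; (eta ** eps) ;; pk (runit F) = pcid F].

Definition counit_lift {A B X Y : O} (H : hor X Y) (R : hor A B) (h : ver X A)
  (eta psi : @pcell DC) : pcell :=
  pk (lunit_inv H) ;; ((pk (hunit_cell h) ;; eta) ** psi) ;; pk (runit R).

Lemma counit_liftK {A B X Y : O} {R : hor A B} {g : ver A B} {H : hor X Y} {h : ver X A}
  {k : ver Y B} eta eps psi :
  is_cell eta (hunit A) R (vid A) g -> is_cell eps R (hunit B) g (vid B) ->
  eta ;; eps = pk (hunit_cell g) -> is_cell psi H (hunit B) (vcomp g h) k ->
  counit_lift H R h eta psi ;; eps = psi.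
Proof.
  move=> Heta Heps E Hpsi.
  rewrite /counit_lift (pvcompA AX) -(runit_nat_pk AX _ Heps) !(pvcompA AX).
  trw (pvcomp_prefix2 AX (esym (interchange_pk AX (pk (hunit_cell h) ;; eta) eps psi
                                              (pk (hunit_cell (vid B))) _ _ _ _))).
  rewrite (pvcompA AX (pk (hunit_cell h))) E (hunit_cell_id_pk AX B) (pvcomp_idr AX _ Hpsi).
  rewrite -(hunit_cell_comp_pk AX) -(lunit_runit_hunit AX B) (lunit_nat_pk AX _ Hpsi).
  by rewrite -(pvcompA AX) (lunit_iso2_pk AX) (pvcomp_idl AX _ Hpsi).
Qed.

Lemma counit_lift_expand {A B X Y : O} {R : hor A B} {g : ver A B} {H : hor X Y}
  {h : ver X A} {k : ver Y B} eta eps w :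
  companion_pair R g eta eps -> is_cell w H R h k -> w = counit_lift H R h eta (w ;; eps).
Proof.
  move=> [Heta Heps _ E] Hw; rewrite /counit_lift.
  trw (interchange_pk AX (pk (hunit_cell h)) eta w eps).
  rewrite -(pvcompA AX) (lunit_inv_nat_pk AX _ Hw) !(pvcompA AX).
  by rewrite -(pvcompA AX (pk (lunit_inv R))) E (pvcomp_idr AX _ Hw).
Qed.

Lemma companion_pair_counit_inj {A B X Y : O} {R : hor A B} {g : ver A B} {H : hor X Y}
  {h : ver X A} {k : ver Y B} eta eps w w' :
  companion_pair R g eta eps -> is_cell w H R h k -> is_cell w' H R h k ->
  w ;; eps = w' ;; eps -> w = w'.
Proof.
  move=> HR Hw Hw' E.
  by rewrite (counit_lift_expand _ _ _ HR Hw) (counit_lift_expand _ _ _ HR Hw') E.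
Qed.

Lemma companion_pair_counit_lift {A B X Y : O} {R : hor A B} {g : ver A B} {H : hor X Y}
  {h : ver X A} {k : ver Y B} eta eps psi :
  companion_pair R g eta eps -> is_cell psi H (hunit B) (vcomp g h) k ->
  exists w, is_cell w H R h k /\ w ;; eps = psi.
Proof.
  move=> [Heta Heps E _] Hpsi; exists (counit_lift H R h eta psi).
  split; first by rewrite /counit_lift; typecheck.
  exact: counit_liftK Heta Heps E Hpsi.
Qed.

Lemma companion_pair_phcomp {A B : O} {R : hor A B} {g : ver A B} {eta eps} :
  companion_pair R g eta eps -> eta ** eps = pk (lunit R) ;; pk (runit_inv R).
Proof.
  move=> [Heta Heps _ E].
  have Hw : is_cell (eta ** eps) (hcomp (hunit A) R) (hcomp R (hunit B)) (vid A) (vid B)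
    by typecheck.
  rewrite -(pvcomp_idl AX _ Hw) -(lunit_iso1_pk AX) (pvcompA AX) -(pvcomp_idr AX _ Hw).
  rewrite -(runit_iso1_pk AX) ?(pvcompA AX) (pvcomp_prefix3 AX E).
  by trw (pvcomp_idl AX).
Qed.

Lemma cartesian_companion_pair {A B : O} {F : hor A B} {p : ver A B}
  {eps : cell F (hunit B) p (vid B)} :
  cartesian eps -> exists eta, companion_pair F p eta (pk eps).
Proof.
  move=> Hc.
  have e1 : p = vcomp p (vid A) by rewrite (vcomp_idr AX).
  have e2 : p = vcomp (vid B) p by rewrite (vcomp_idl AX).
  have [eta [Heta _]] := Hc A A (hunit A) (vid A) p (ccast erefl erefl e1 e2 (hunit_cell p)).
  have E : pk eta ;; pk eps = pk (hunit_cell p) by rewrite pvcomp_pk Heta pk_ccast.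
  exists (pk eta); split => //; try exact: is_cell_pk.
  have [w Ew] : is_cell (pk (lunit_inv F) ;; (pk eta ** pk eps) ;; pk (runit F))
                        F F (vid A) (vid B) by typecheck.
  rewrite Ew.
  have [c [_ uniq]] := Hc A B F (vid A) (vid B) (ccomp (cid F) eps).
  have -> : w = cid F.
  { rewrite -(uniq w) ?(uniq (cid F)) //; apply: pk_inj; rewrite -!pvcomp_pk -Ew.
    rewrite (pvcomp_idl AX _ (is_cell_pk _)).
    have := counit_liftK (h := vid A) (H := F) (k := vid B) (pk eta) (pk eps) (pk eps)
      (is_cell_pk _) (is_cell_pk _) E ltac:(typecheck).
    by rewrite /counit_lift (hunit_cell_id_pk AX) (pvcomp_idl AX _ (is_cell_pk _)). }
  done.
Qed.

Lemma opcartesian_companion_pair {A B : O} {F : hor A B} {p : ver A B}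
  {eta : cell (hunit A) F (vid A) p} :
  opcartesian eta -> exists eps, companion_pair F p (pk eta) eps.
Proof.
  move=> Hc.
  have e1 : p = vcomp p (vid A) by rewrite (vcomp_idr AX).
  have e2 : p = vcomp (vid B) p by rewrite (vcomp_idl AX).
  have [eps [Heps _]] := Hc B B (hunit B) p (vid B) (ccast erefl erefl e1 e2 (hunit_cell p)).
  have E : pk eta ;; pk eps = pk (hunit_cell p) by rewrite pvcomp_pk Heps pk_ccast.
  exists (pk eps); split => //; try exact: is_cell_pk.
  have [w Ew] : is_cell (pk (lunit_inv F) ;; (pk eta ** pk eps) ;; pk (runit F))
                        F F (vid A) (vid B) by typecheck.
  rewrite Ew.
  have [c [_ uniq]] := Hc A B F (vid A) (vid B) (ccomp eta (cid F)).
  have -> : w = cid F.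
  { rewrite -(uniq w) ?(uniq (cid F)) //; apply: pk_inj; rewrite -!pvcomp_pk -Ew.
    rewrite (pvcomp_idr AX _ (is_cell_pk _)) !(pvcompA AX).
    rewrite (pvcomp_prefix2 AX (esym (lunit_inv_nat_pk AX _ (is_cell_pk eta)))) !(pvcompA AX).
    trw (pvcomp_prefix2 AX (esym (interchange_pk AX (pk (hunit_cell (vid A))) _ _ _ _ _ _ _))).
    rewrite E (hunit_cell_id_pk AX) (pvcomp_idl AX _ (is_cell_pk _)).
    rewrite (runit_nat_pk AX _ (is_cell_pk _)) -(lunit_runit_hunit AX A) -(pvcompA AX).
    by rewrite (lunit_iso2_pk AX) (pvcomp_idl AX _ (is_cell_pk _)). }
  done.
Qed.

Lemma companion_pair_hcomp_phcomp {A B C : O} {F : hor A B} {G : hor B C} {p : ver A B}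
  {q : ver B C} {eta eps th de} :
  companion_pair F p eta eps -> companion_pair G q th de ->
  (pk (lunit_inv (hunit A)) ;; (eta ** (pk (hunit_cell p) ;; th))) **
  (((eps ;; pk (hunit_cell q)) ** de) ;; pk (lunit (hunit C))) =
  pk (lunit (hcomp F G)) ;; pk (runit_inv (hcomp F G)).
Proof.
  move=> HF HG; have [Heta Heps _ _] := HF; have [Hth Hde _ _] := HG.
  trw (phcomp_pvcomp_ends AX (pk (lunit_inv (hunit A))) (eta ** (pk (hunit_cell p) ;; th))
         ((eps ;; pk (hunit_cell q)) ** de) (pk (lunit (hunit C)))).
  trw (phcomp_reassoc_l AX eta (pk (hunit_cell p) ;; th) ((eps ;; pk (hunit_cell q)) ** de)).
  trw (phcomp_reassoc_r AX (pk (hunit_cell p) ;; th) (eps ;; pk (hunit_cell q)) de).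
  trw (hunit_cell_phcomp_swap AX eps th).
  have -> : (pk (lunit F) ;; (eps ;; (th ;; pk (runit_inv G)))) ** de =
     pk (lunit F) ** pcid G ;; (eps ** pcid G ;; (th ** de ;; pk (runit_inv G) ** pcid (hunit C))).
  { trw <- (interchange_pk AX th (pk (runit_inv G)) de (pcid (hunit C))).
    trw (pvcomp_idr AX de).
    trw <- (interchange_pk AX eps (th ;; pk (runit_inv G)) (pcid G) de).
    trw (pvcomp_idl AX de).
    trw <- (interchange_pk AX (pk (lunit F)) (eps ;; (th ;; pk (runit_inv G))) (pcid G) de).
    by trw (pvcomp_idl AX de). }
  rewrite (companion_pair_phcomp HG) !(pvcompA AX) -(pvcompA AX (pk (assoc_inv (hunit A) F G))).
  trw (phcomp_pvcomp_split AX eta).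
  rewrite (assoc_inv_lunit_pk AX F G).
  trw (phcomp_reassoc_r AX eta eps (pcid G)).
  rewrite (companion_pair_phcomp HF).
  trw (whiskerr_pvcomp AX G (pk (lunit F)) (pk (runit_inv F))).
  do 3 trw (whiskerl_pvcomp AX F).
  rewrite !(pvcompA AX) (pvcomp_prefix2 AX (assoc_inv_lunit_pk AX F G)).
  rewrite (pvcomp_prefix3 AX (runit_inv_assoc_lunit_pk AX F G)).
  trw (pvcomp_prefix2 AX (pvcomp_idl AX (J := hcomp F G) (pcid F ** pk (runit_inv G)) _)).
  rewrite (pvcomp_prefix3 AX (lunit_inv_assoc_lunit_pk AX (hcomp F G))).
  trw (pvcomp_prefix2 AX (pvcomp_idl AX (J := hcomp (hunit A) (hcomp F G)) (pk (lunit (hcomp F G))) _)).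
  by rewrite (runit_inv_hcomp_expand AX F G).
Qed.

Lemma companion_pair_hcomp {A B C : O} {F : hor A B} {G : hor B C} {p : ver A B}
  {q : ver B C} eta eps th de :
  companion_pair F p eta eps -> companion_pair G q th de ->
  companion_pair (hcomp F G) (vcomp q p)
    (pk (lunit_inv (hunit A)) ;; (eta ** (pk (hunit_cell p) ;; th)))
    (((eps ;; pk (hunit_cell q)) ** de) ;; pk (lunit (hunit C))).
Proof.
  move=> HF HG; have [Heta Heps Ep _] := HF; have [Hth Hde Eq _] := HG.
  split; [typecheck | typecheck | |].
  - rewrite !(pvcompA AX).
    trw (pvcomp_prefix2 AX (esym (interchange_pk AX eta (eps ;; pk (hunit_cell q))
                                                (pk (hunit_cell p) ;; th) de _ _ _ _))).
    rewrite -(pvcompA AX eta) Ep -(hunit_cell_comp_pk AX) (pvcompA AX (pk (hunit_cell p))) Eq.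
    rewrite -(hunit_cell_comp_pk AX); trw (lunit_nat_pk AX).
    by rewrite -(pvcompA AX) (lunit_iso2_pk AX); trw (pvcomp_idl AX).
  - rewrite (companion_pair_hcomp_phcomp HF HG) !(pvcompA AX).
    rewrite (pvcomp_prefix2 AX (lunit_iso2_pk AX (hcomp F G))) (runit_iso2_pk AX).
    by trw (pvcomp_idl AX (pcid (hcomp F G))).
Qed.

Lemma companion_pair_comparison_inv {A B : O} {R R' : hor A B} {g : ver A B}
  {eta eps eta' eps'} X :
  companion_pair R g eta eps -> companion_pair R' g eta' eps' ->
  is_cell X R R' (vid A) (vid B) -> X ;; eps' = eps ->
  exists Y, [/\ is_cell Y R' R (vid A) (vid B), X ;; Y = pcid R & Y ;; X = pcid R'].
Proof.
  move=> HR HR' HX E; have [_ Heps _ _] := HR; have [_ Heps' _ _] := HR'.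
  have [Y [HY EY]] : exists Y, is_cell Y R' R (vid A) (vid B) /\ Y ;; eps = eps'.
  { apply: (companion_pair_counit_lift _ _ _ HR); typecheck. }
  exists Y; split => //.
  - apply: (companion_pair_counit_inj _ _ _ _ HR); [typecheck | typecheck |].
    by rewrite (pvcompA AX) EY E; trw (pvcomp_idl AX).
  - apply: (companion_pair_counit_inj _ _ _ _ HR'); [typecheck | typecheck |].
    by rewrite (pvcompA AX) E EY; trw (pvcomp_idl AX).
Qed.

End CompanionPairs.

Section LaxFunctors.
Context {DC : DCData} (AX : DCAxioms DC) {T : LaxData DC} (HT : NormalLax T).
Local Notation O := (ob DC).

Lemma pfc_pk {A B C D : O} {J : hor A B} {L : hor C D} {f : ver A C} {g : ver B D}
  (x : cell J L f g) : pfc T (pk x) = pk (fc T x).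
Proof. by []. Qed.

Lemma pfc_pvcomp {A B C D E G : O} {J : hor A B} {K : hor C D} {L : hor E G}
  {f : ver A C} {g : ver B D} {f' : ver C E} {g' : ver D G} a b :
  is_cell a J K f g -> is_cell b K L f' g' -> pfc T (a ;; b) = pfc T a ;; pfc T b.
Proof. move=> ??; unpack; rewrite !pvcomp_pk !pfc_pk; exact/ceq_pk_eq/(fc_comp HT). Qed.

Lemma pfc_pcid {A B : O} (J : hor A B) : pfc T (pcid J) = pcid (fh T J).
Proof. exact/ceq_pk_eq/(fc_id HT). Qed.

Lemma pfc_hunit_cell {A C : O} (f : ver A C) :
  pfc T (pk (hunit_cell f)) = pk (hunit_cell (fv T f)).
Proof. exact/ceq_pk_eq/(fc_unit HT). Qed.

Lemma fcomp_nat_pk {A B C A' B' C' : O} {J : hor A B} {K : hor B C} {J' : hor A' B'}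
  {K' : hor B' C'} {f : ver A A'} {g : ver B B'} {h : ver C C'} x y :
  is_cell x J J' f g -> is_cell y K K' g h ->
  pfc T x ** pfc T y ;; pk (fcomp T J' K') = pk (fcomp T J K) ;; pfc T (x ** y).
Proof.
  move=> ??; unpack; rewrite !phcomp_pk !pvcomp_pk ?pfc_pk.
  exact/ceq_pk_eq/(fcomp_nat HT).
Qed.

Lemma fcomp_runit_pk {A B : O} (J : hor A B) :
  pk (fcomp T J (hunit B)) ;; pfc T (pk (runit J)) = pk (runit (fh T J)).
Proof. rewrite pfc_pk pvcomp_pk; exact/ceq_pk_eq/(fcomp_runit HT). Qed.

Lemma fcomp_hunit_l_pk {A B : O} (F : hor A B) :
  pk (fcomp T (hunit A) F) = pk (lunit (fh T F)) ;; pfc T (pk (lunit_inv F)).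
Proof.
  have E : pk (fcomp T (hunit A) F) ;; pfc T (pk (lunit F)) = pk (lunit (fh T F)).
    by rewrite pfc_pk pvcomp_pk; exact/ceq_pk_eq/(fcomp_lunit HT).
  rewrite -E (pvcompA AX); trw <- (pfc_pvcomp (pk (lunit F)) (pk (lunit_inv F))).
  by rewrite (lunit_iso1_pk AX) pfc_pcid; trw (pvcomp_idr AX).
Qed.

Lemma companion_pair_pfc {A B : O} {F : hor A B} {p : ver A B} eta eps :
  companion_pair F p eta eps ->
  companion_pair (fh T F) (fv T p) (pfc T eta) (pfc T eps).
Proof.
  move=> [Heta Heps Eunit Ezigzag]; split; [typecheck | typecheck | |].
  - by trw <- (pfc_pvcomp eta eps); rewrite Eunit pfc_hunit_cell.
  - rewrite -(fcomp_runit_pk F) !(pvcompA AX).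
    trw (pvcomp_prefix2 AX (fcomp_nat_pk eta eps _ _)).
    rewrite fcomp_hunit_l_pk !(pvcompA AX) (pvcomp_prefix2 AX (lunit_iso2_pk AX (fh T F))).
    trw (pvcomp_prefix2 AX (pvcomp_idl AX (J := fh T F) (pfc T (pk (lunit_inv F))) _)).
    trw <- (pfc_pvcomp (eta ** eps) (pk (runit F))).
    trw <- (pfc_pvcomp (pk (lunit_inv F)) (eta ** eps ;; pk (runit F))).
    by rewrite -(pvcompA AX) Ezigzag pfc_pcid.
Qed.

End LaxFunctors.

Section Monads.
Context {DC : DCData} (AX : DCAxioms DC) {T : LaxData DC} (HT : NormalLax T)
  {M : MonadData T} (HM : MonadAxioms M).
Local Notation O := (ob DC).

Lemma iota_nat_pk {A B C D : O} {J : hor A B} {K : hor C D} {f : ver A C} {g : ver B D} x :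
  is_cell x J K f g -> x ;; pk (iota_cell M K) = pk (iota_cell M J) ;; pfc T x.
Proof. by move=> [x' ->]; rewrite pfc_pk !pvcomp_pk; exact/ceq_pk_eq/(iota_natc HM). Qed.

Lemma iota_unit_pk (A : O) : pk (iota_cell M (hunit A)) = pk (hunit_cell (iota_ob M A)).
Proof. exact/ceq_pk_eq/(iota_unit HM). Qed.

Lemma pk_iota_star {A B : O} (J : hor A B) (cA : companion (iota_ob M A))
  (cB : companion (iota_ob M B)) :
  pk (iota_star J cA cB) =
  pk (lunit_inv (hcomp J (cmp cB))) ;;
  (pk (cmp_opcart cA) ** (pk (iota_cell M J) ** pk (cmp_cart cB)) ;;
   (pk (assoc_inv (cmp cA) (fh T J) (hunit (fo T B))) ;;
    pk (runit (hcomp (cmp cA) (fh T J))))).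
Proof. by rewrite !phcomp_pk !pvcomp_pk. Qed.

(* Naturality of [iota] is what moves [phi] across the cell [iota_{J*}]. *)
Lemma iota_star_counit {A C : O} {J : hor A C} {f : ver A C}
  (phi : cell J (hunit C) f (vid C))
  (cA : companion (iota_ob M A)) (cC : companion (iota_ob M C)) epsA :
  is_cell epsA (cmp cA) (hunit (fo T A)) (iota_ob M A) (vid (fo T A)) ->
  pk (cmp_opcart cA) ;; epsA = pk (hunit_cell (iota_ob M A)) ->
  pk (iota_star J cA cC) ;;
    ((epsA ;; pk (hunit_cell (fv T f))) ** pfc T (pk phi) ;; pk (lunit (hunit (fo T C)))) =
  (pk phi ;; pk (hunit_cell (iota_ob M C))) ** pk (cmp_cart cC) ;;
    pk (lunit (hunit (fo T C))).
Proof.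
  move=> HepsA EA; rewrite pk_iota_star !(pvcompA AX).
  trw <- (runit_nat_pk AX ((epsA ;; pk (hunit_cell (fv T f))) ** pfc T (pk phi) ;;
                          pk (lunit (hunit (fo T C))))).
  rewrite (fv_id HT) (vcomp_idl AX) (hunit_cell_id_pk AX (fo T C)).
  trw (whiskerr_pvcomp AX (hunit (fo T C)) ((epsA ;; pk (hunit_cell (fv T f))) ** pfc T (pk phi))
                        (pk (lunit (hunit (fo T C))))).
  rewrite !(pvcompA AX).
  trw (pvcomp_prefix2 AX (assoc_inv_nat_pk AX (epsA ;; pk (hunit_cell (fv T f))) (pfc T (pk phi))
                                      (pcid (hunit (fo T C))) _ _ _)).
  rewrite !(pvcompA AX) (fh_unit HT).
  trw (pvcomp_prefix2 AX (esym (interchange_pk AX (pk (cmp_opcart cA))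
          (epsA ;; pk (hunit_cell (fv T f))) (pk (iota_cell M J) ** pk (cmp_cart cC))
          (pfc T (pk phi) ** pcid (hunit (fo T C))) _ _ _ _))).
  trw <- (interchange_pk AX (pk (iota_cell M J)) (pfc T (pk phi)) (pk (cmp_cart cC))
                         (pcid (hunit (fo T C)))).
  rewrite -(pvcompA AX (pk (cmp_opcart cA))) EA -(hunit_cell_comp_pk AX).
  trw <- (iota_nat_pk (pk phi)).
  rewrite iota_unit_pk (iota_natv HM).
  trw (pvcomp_idr AX (pk (cmp_cart cC))).
  trw (pvcomp_prefix2 AX (lunit_inv_nat_pk AX
         ((pk phi ;; pk (hunit_cell (iota_ob M C))) ** pk (cmp_cart cC)) _)).
  rewrite !(pvcompA AX) (pvcomp_prefix2 AX (assoc_inv_lunit_pk AX _ _)) -(pvcompA AX (pk (lunit_inv _))).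
  rewrite (lunit_iso2_pk AX); trw (pvcomp_idl AX (pk (runit (hunit (fo T C))))).
  by rewrite (lunit_runit_hunit AX).
Qed.

End Monads.

Theorem proposition5p6 (K : DoubleCat) (HK : equipment K)
  (T : LaxData K) (HT : NormalLax T) (M : MonadData T) (HM : MonadAxioms M)
  (A C : ob K) (f : ver A C) (cf : companion f)
  (cA : companion (iota_ob M A)) (cC : companion (iota_ob M C)) :
  right_BC (cmp cf) cA cC.
Proof.
  have AX := dc_ax K.
  have [etaf Hf] := cartesian_companion_pair AX (cmp_cart_ok cf).
  have [etaC HC] := cartesian_companion_pair AX (cmp_cart_ok cC).
  have [epsA HA] := opcartesian_companion_pair AX (cmp_opcart_ok cA).
  have Hsrc := companion_pair_hcomp AX _ _ _ _ Hf HC.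
  have Htgt := companion_pair_hcomp AX _ _ _ _ HA (companion_pair_pfc AX HT _ _ Hf).
  rewrite (iota_natv HM) in Htgt.
  apply: (pk_hinvertible_up _ _ erefl); first by typecheck.
  apply: (companion_pair_comparison_inv AX _ Hsrc Htgt); first by typecheck.
  have [_ HepsA EA _] := HA.
  exact: (iota_star_counit AX HT HM (cmp_cart cf) cA cC epsA HepsA EA).
Qed.
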